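(* For every integer $k\geq 1$, the Dobrynin graph $\mathrm{Dob}_k$ (defined below) is interval transmission irregular; more precisely, its $2k+5$ vertices have pairwise distinct transmissions, and the set of these transmissions is $\{3k+4,3k+5,\dots,5k+8\}$.
   Context: All graphs are finite, simple and connected. For a connected graph $G$ and a vertex $u$, the transmission is $Tr_G(u)=\sum_{v\in V(G)} d_G(u,v)$, where $d_G$ is the shortest-path distance. A graph is transmission irregular (TI) if no two of its vertices have equal transmission, and interval transmission irregular (ITI) if it is TI and its set of vertex transmissions equals $[p,q]\cap\mathbb{Z}$ for some integers $p\le q$. The Dobrynin graph $\mathrm{Dob}_k$ ($k\ge1$) has vertex set $\{a,b,c,d\}\cup A\cup B\cup\{ab_1,ab_2\}$ with $A=\{a_0,a_1,\dots,a_{k-1}\}$ and $B=\{b_1,\dots,b_{k-1}\}$ (so $B=\emptyset$ when $k=1$), and edge set: $ab$; $ac$ and $bd$ (so $c,d$ are pendent); $a a_i$ for all $i$; $b b_j$ for all $j$; $a\,ab_1, b\,ab_1, a\,ab_2, b\,ab_2$; $a_i b_j$ for all $1\le j\le i\le k-1$ (so $a_i$ is adjacent to $b_1,\dots,b_i$); $ab_1 a_i$ for all $0\le i\le k-1$; and $ab_2 b_j$ for all $1\le j\le k-1$. There are no other edges. *)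

From mathcomp Require Import all_boot.
Set Implicit Arguments. Unset Strict Implicit. Unset Printing Implicit Defensive.

Definition walkb (T : finType) (e : rel T) (u v : T) (n : nat) : bool :=
  [exists p : n.-tuple T, path e u p && (last u p == v)].

(* In a connected graph on #|T| vertices such an n exists and is < #|T|, so the
   search range iota 0 #|T| suffices (unreachable pairs would get #|T|). *)
Definition dist (T : finType) (e : rel T) (u v : T) : nat :=
  find (walkb e u v) (iota 0 #|T|).

Definition connectedb (T : finType) (e : rel T) : bool :=
  [forall u, forall v, has (walkb e u v) (iota 0 #|T|)].

Definition simple_graph (T : finType) (e : rel T) : Prop :=
  (forall x y, e x y = e y x) /\ (forall x, ~~ e x x).

Definition transmission (T : finType) (e : rel T) (u : T) : nat :=
  \sum_(v : T) dist e u v.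

Definition TI (T : finType) (e : rel T) : Prop := injective (transmission e).

Definition ITI (T : finType) (e : rel T) : Prop :=
  TI e /\ exists p q : nat, p <= q /\
    forall n : nat, (exists u : T, transmission e u = n) <-> p <= n <= q.

Inductive dob_kind := Ka | Kb | Kc | Kd | KA of nat | KB of nat | Kab1 | Kab2.

(* Vertex type: 4 named vertices a,b,c,d; A = {a_0..a_{k-1}};
   B = {b_1..b_{k-1}} (index j : 'I_(k-1) stands for b_{j+1}); ab_1, ab_2. *)
Definition dob_vertex (k : nat) : finType := ('I_4 + 'I_k + 'I_k.-1 + 'I_2)%type.

Definition dob_kind_of (k : nat) (x : dob_vertex k) : dob_kind :=
  match x with
  | inl (inl (inl t)) =>
      match nat_of_ord t with 0 => Ka | 1 => Kb | 2 => Kc | _ => Kd end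
  | inl (inl (inr i)) => KA (nat_of_ord i)
  | inl (inr j) => KB (nat_of_ord j).+1
  | inr t => if nat_of_ord t == 0 then Kab1 else Kab2
  end.

(* One orientation of each edge of Dob_k. *)
Definition dob_edge1 (p q : dob_kind) : bool :=
  match p, q with
  | Ka, Kb | Ka, Kc | Kb, Kd => true
  | Ka, KA _ => true
  | Kb, KB _ => true
  | Kab1, Ka | Kab1, Kb | Kab2, Ka | Kab2, Kb => true
  | KA i, KB j => j <= i
  | Kab1, KA _ => true
  | Kab2, KB _ => true
  | _, _ => false
  end.

Definition dob_adj (k : nat) : rel (dob_vertex k) :=
  fun x y => dob_edge1 (dob_kind_of x) (dob_kind_of y)
          || dob_edge1 (dob_kind_of y) (dob_kind_of x).

From HB Require Import structures.
From mathcomp Require Import all_boot zify.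

Set Implicit Arguments.
Unset Strict Implicit.
Unset Printing Implicit Defensive.

(* The hubs [a] and [b] are adjacent and every other vertex is adjacent to one
   of them, so all distances are at most 3; they depend only on the kinds of
   the two vertices, and the pairs at distance 3 are exactly c-d, c-b_j, d-a_i
   and a_i-b_j with i < j.  Summing gives the transmissions
   Tr(a) = 3k+4, Tr(b) = 3k+5, Tr(ab_1) = 3k+6, Tr(ab_2) = 3k+7,
   Tr(b_j) = 3k+7+2j, Tr(a_i) = 5k+6-2i, Tr(c) = 5k+7, Tr(d) = 5k+8.
   These 2k+5 values are pairwise distinct and lie in [3k+4, 5k+8], an interval
   with 2k+5 elements, so they fill it. *)

Lemma sum_ord_if_lt n m x y :
  \sum_(i < n) (if i < m then x else y) = minn m n * x + (n - m) * y.
Proof.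
elim: n => [|n IHn]; first by rewrite big_ord0; lia.
rewrite big_ord_recr /= IHn; case: (ltnP n m) => n_m.
- have -> : minn m n.+1 = n.+1 by lia.
  have [-> ->] : n - m = 0 /\ n.+1 - m = 0 by lia.
  by rewrite !mul0n !addn0 mulSn addnC.
- have -> : minn m n.+1 = m by lia.
  by rewrite subSn // mulSn [y + _]addnC addnA.
Qed.

Lemma sum_ord_if_eq n m x y :
  \sum_(i < n) (if m == i :> nat then x else y) =
  (if m < n then x + n.-1 * y else n * y).
Proof.
elim: n => [|n IHn]; first by rewrite big_ord0.
by rewrite big_ord_recr /= IHn; case: (ltngtP m n) => mn; case: (ltngtP m n.+1) => mn1; nia.
Qed.

Lemma inj_interval_surj (T : finType) (f : T -> nat) p q :
  injective f -> #|T| = q.+1 - p -> (forall x, p <= f x <= q) ->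
  forall n, p <= n <= q -> exists x, f x = n.
Proof.
move=> f_inj cardT f_range n n_range.
have uniq_img : uniq (map f (enum T)) by rewrite map_inj_uniq ?enum_uniq.
have sub_img : {subset map f (enum T) <= iota p (q.+1 - p)}.
  by move=> _ /mapP[x _ ->]; rewrite mem_iota; have := f_range x; lia.
have size_img : size (iota p (q.+1 - p)) <= size (map f (enum T)).
  by rewrite size_map size_iota -cardE cardT.
have [_ img_f] := uniq_min_size uniq_img sub_img size_img.
have : n \in map f (enum T) by rewrite img_f mem_iota; lia.
by case/mapP=> x _ ->; exists x.
Qed.

Section Walks.
Variables (T : finType) (e : rel T).

Lemma walkbP u v n :
  reflect (exists s : seq T, [/\ size s = n, path e u s & last u s == v])
          (walkb e u v n).
Proof.
apply: (iffP existsP) => [[p /andP[p_path p_last]]|[s [s_size s_path s_last]]].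
  by exists (val p); rewrite size_tuple.
have s_size' : size s == n by apply/eqP.
by exists (Tuple s_size'); rewrite /= s_path s_last.
Qed.

Lemma walkb0 u v : walkb e u v 0 = (u == v).
Proof. by apply/walkbP/idP => [[[|? ?] [] //]|/eqP ->]; exists [::]. Qed.

Lemma walkbS u v n : walkb e u v n.+1 = [exists w, e u w && walkb e w v n].
Proof.
apply/walkbP/existsP => [[[|w s] [//= [s_size] /andP[uw s_path] s_last]]|].
  by exists w; rewrite uw; apply/walkbP; exists s.
case=> w /andP[uw /walkbP[s [s_size s_path s_last]]].
by exists (w :: s); rewrite /= s_size uw.
Qed.

Lemma walkb1 u v : walkb e u v 1 = e u v.
Proof.
rewrite walkbS; apply/existsP/idP => [[w]|uv]; first by rewrite walkb0 => /andP[? /eqP <-].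
by exists v; rewrite walkb0 eqxx andbT.
Qed.

Lemma walkb2P u v : reflect (exists w, e u w && e w v) (walkb e u v 2).
Proof.
rewrite walkbS; apply: (iffP existsP) => -[w]; first by rewrite walkb1; exists w.
by exists w; rewrite walkb1.
Qed.

Lemma dist_eq u v m :
  m < #|T| -> walkb e u v m -> (forall n, n < m -> ~~ walkb e u v n) ->
  dist e u v = m.
Proof.
move=> m_lt walk_m no_shorter; rewrite /dist.
have has_walk : has (walkb e u v) (iota 0 #|T|).
  by apply/hasP; exists m; rewrite ?mem_iota.
have := has_find (walkb e u v) (iota 0 #|T|); rewrite has_walk size_iota => find_lt.
have := nth_find 0 has_walk; rewrite nth_iota // add0n => walk_find.
case: (ltngtP (find (walkb e u v) (iota 0 #|T|)) m) => [lt_m|gt_m|//].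
- by move: (no_shorter _ lt_m); rewrite walk_find.
- by have := before_find 0 gt_m; rewrite nth_iota // add0n walk_m.
Qed.

End Walks.

Definition dob_kind_eqb (p q : dob_kind) : bool :=
  match p, q with
  | Ka, Ka | Kb, Kb | Kc, Kc | Kd, Kd | Kab1, Kab1 | Kab2, Kab2 => true
  | KA i, KA j | KB i, KB j => i == j
  | _, _ => false
  end.

Lemma dob_kind_eqbP : Equality.axiom dob_kind_eqb.
Proof.
by case=> [||||i|i||] [||||j|j||] /=; try constructor; try apply: (iffP eqP) => [->|[]].
Qed.

HB.instance Definition _ := hasDecEq.Build dob_kind dob_kind_eqbP.

Definition dob_kind_adj (p q : dob_kind) : bool := dob_edge1 p q || dob_edge1 q p.

Definition dob_kind_far (p q : dob_kind) : bool :=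
  match p, q with
  | Kc, Kd | Kc, KB _ | Kd, KA _ => true
  | KA i, KB j => i < j
  | _, _ => false
  end.

Definition dob_kind_dist (p q : dob_kind) : nat :=
  if p == q then 0
  else if dob_kind_adj p q then 1
  else if dob_kind_far p q || dob_kind_far q p then 3
  else 2.

Definition dob_kind_valid (k : nat) (p : dob_kind) : bool :=
  match p with KA i => i < k | KB j => 0 < j < k | _ => true end.

Lemma dob_kind_dist_le3 p q : dob_kind_dist p q <= 3.
Proof. by rewrite /dob_kind_dist; repeat case: ifP. Qed.

Lemma dob_kind_dist_eq0 p q : (dob_kind_dist p q == 0) = (p == q).
Proof. by rewrite /dob_kind_dist; case: eqP => //; repeat case: ifP. Qed.

Lemma dob_kind_dist_eq1 p q : dob_kind_dist p q = 1 -> dob_kind_adj p q.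
Proof. by rewrite /dob_kind_dist; case: ifP => // _; case: ifP => // _; case: ifP. Qed.

Lemma dob_kind_dist_ge2 p q : 2 <= dob_kind_dist p q -> ~~ dob_kind_adj p q.
Proof. by rewrite /dob_kind_dist; case: ifP => // _; case: ifP. Qed.

Ltac dob_kind_cases :=
  rewrite /dob_kind_dist /dob_kind_adj;
  case=> [||||i|i||] [||||j|j||] //=;
  try (case: ifP => //; case: ifP => //; case: ifP => //);
  rewrite ?orbF; try case: leqP.

Lemma dob_kind_dist2_hub p q : dob_kind_dist p q = 2 ->
  (dob_kind_adj p Ka && dob_kind_adj Ka q) || (dob_kind_adj p Kb && dob_kind_adj Kb q).
Proof. by move: p q; dob_kind_cases. Qed.

Lemma dob_kind_dist3_hub p q : dob_kind_dist p q = 3 ->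
  (dob_kind_adj p Ka && dob_kind_adj Kb q) || (dob_kind_adj p Kb && dob_kind_adj Ka q).
Proof. by move: p q; dob_kind_cases. Qed.

Lemma dob_kind_dist3_no_common_neighbor p q w : dob_kind_dist p q = 3 ->
  ~~ (dob_kind_adj p w && dob_kind_adj w q).
Proof.
by move: p q; dob_kind_cases; case: w => [||||l|l||] //=; rewrite ?orbF ?andbF //; lia.
Qed.

Lemma dob_kind_of_inj k : injective (@dob_kind_of k).
Proof.
case=> [[[t|i]|j]|s] [[[t'|i']|j']|s'] /=;
  try (case: t => [[|[|[|[|?]]]] ?] //=); try (case: t' => [[|[|[|[|?]]]] ?] //=);
  try (case: s => [[|[|?]] ?] //=); try (case: s' => [[|[|?]] ?] //=).
all: try discriminate.
all: try by move=> _; do ?[congr inl | congr inr]; apply: val_inj.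
all: by move=> [/val_inj ->].
Qed.

Lemma dob_kind_of_valid k (x : dob_vertex k) : dob_kind_valid k (dob_kind_of x).
Proof.
case: x => [[[t|i]|j]|s] /=; try (case: t => [[|[|[|[|?]]]] ?] //=);
  try (case: s => [[|[|?]] ?] //=); first exact: ltn_ord.
by have := ltn_ord j; lia.
Qed.

Lemma card_dob_vertex k : #|dob_vertex k| = k + k.-1 + 6.
Proof. by rewrite !card_sum !card_ord; lia. Qed.

Section DobDistance.
Variable k : nat.

Let a : dob_vertex k := inl (inl (inl (@Ordinal 4 0 isT))).
Let b : dob_vertex k := inl (inl (inl (@Ordinal 4 1 isT))).

Lemma dist_dob u v :
  dist (@dob_adj k) u v = dob_kind_dist (dob_kind_of u) (dob_kind_of v).
Proof.
have d_le3 := dob_kind_dist_le3 (dob_kind_of u) (dob_kind_of v).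
apply: dist_eq; first by rewrite card_dob_vertex; lia.
- case d_eq: (dob_kind_dist _ _) d_le3 => [|[|[|[|//]]]] _.
  + by rewrite walkb0; apply/eqP/dob_kind_of_inj/eqP; rewrite -dob_kind_dist_eq0 d_eq.
  + by rewrite walkb1; apply: dob_kind_dist_eq1.
  + by apply/walkb2P; case/orP: (dob_kind_dist2_hub d_eq) => ?; [exists a | exists b].
  + rewrite walkbS; apply/existsP.
    case/orP: (dob_kind_dist3_hub d_eq) => /andP[? ?].
    * by exists a; apply/andP; split=> //; apply/walkb2P; exists b; apply/andP.
    * by exists b; apply/andP; split=> //; apply/walkb2P; exists a; apply/andP.
- move=> [|[|[|n]]] // n_lt.
  + by rewrite walkb0; apply: contraTN n_lt => /eqP ->; rewrite /dob_kind_dist eqxx.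
  + by rewrite walkb1; apply: dob_kind_dist_ge2.
  + apply/walkb2P => -[w /andP[uw wv]].
    have d_eq3 : dob_kind_dist (dob_kind_of u) (dob_kind_of v) = 3 by lia.
    have /negP := dob_kind_dist3_no_common_neighbor (dob_kind_of w) d_eq3.
    by apply; apply/andP.
  + by move: n_lt; rewrite ltnNge (leq_trans d_le3).
Qed.

End DobDistance.

Definition dob_kind_trans_sum (k : nat) (p : dob_kind) : nat :=
  dob_kind_dist p Ka + dob_kind_dist p Kb + dob_kind_dist p Kc + dob_kind_dist p Kd
  + \sum_(i < k) dob_kind_dist p (KA i) + \sum_(j < k.-1) dob_kind_dist p (KB j.+1)
  + dob_kind_dist p Kab1 + dob_kind_dist p Kab2.

Lemma transmission_dob_kind k (u : dob_vertex k) :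
  transmission (@dob_adj k) u = dob_kind_trans_sum k (dob_kind_of u).
Proof.
rewrite /transmission; under eq_bigr do rewrite dist_dob.
by rewrite !big_sumType /= !big_ord_recr !big_ord0 /= !add0n !addnA.
Qed.

Definition dob_kind_trans (k : nat) (p : dob_kind) : nat :=
  match p with
  | Ka => 3 * k + 4 | Kb => 3 * k + 5 | Kab1 => 3 * k + 6 | Kab2 => 3 * k + 7
  | KB j => 3 * k + 7 + 2 * j | KA i => 5 * k + 6 - 2 * i
  | Kc => 5 * k + 7 | Kd => 5 * k + 8
  end.

Lemma dob_kind_trans_sumE k p :
  0 < k -> dob_kind_valid k p -> dob_kind_trans_sum k p = dob_kind_trans k p.
Proof.
rewrite /dob_kind_trans_sum => k_gt0; case: p => [||||i|j||] /= p_valid;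
  rewrite ?sum_nat_const ?card_ord /dob_kind_dist /=; try lia.
- rewrite (eq_bigr (fun i' : 'I_k => if i == i' :> nat then 0 else 2)) //.
  rewrite (eq_bigr (fun j : 'I_k.-1 => if j < i then 1 else 3)); last first.
    by move=> j _; rewrite /dob_kind_adj /= ?orbF ltnS; case: leqP.
  by rewrite sum_ord_if_eq sum_ord_if_lt p_valid; lia.
- rewrite (eq_bigr (fun i : 'I_k => if i < j then 3 else 1)); last first.
    by move=> i _; rewrite /dob_kind_adj /= ?orbF; case: leqP.
  rewrite (eq_bigr (fun j' : 'I_k.-1 => if j.-1 == j' :> nat then 0 else 2)); last first.
    by move=> j' _; rewrite -[KB _ == _]/(j == j'.+1); do 2 case: eqP; lia.
  rewrite sum_ord_if_eq sum_ord_if_lt.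
  have -> : j.-1 < k.-1 by lia.
  lia.
Qed.

Lemma transmission_dob k (u : dob_vertex k) :
  0 < k -> transmission (@dob_adj k) u = dob_kind_trans k (dob_kind_of u).
Proof.
by move=> k_gt0; rewrite transmission_dob_kind dob_kind_trans_sumE ?dob_kind_of_valid.
Qed.

Lemma dob_kind_trans_inj k p q : 0 < k -> dob_kind_valid k p -> dob_kind_valid k q ->
  dob_kind_trans k p = dob_kind_trans k q -> p = q.
Proof.
move=> k_gt0; case: p => [||||i|i||]; case: q => [||||j|j||] //= p_valid q_valid eq_tr;
  first [exfalso; lia | congr (_ _); lia].
Qed.

Lemma dob_kind_trans_bounds k p :
  dob_kind_valid k p -> 3 * k + 4 <= dob_kind_trans k p <= 5 * k + 8.
Proof. by case: p => [||||i|i||] /=; lia. Qed.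

Theorem theorem3 (k : nat) (hk : 1 <= k) :
  #|dob_vertex k| = 2 * k + 5 /\
  injective (transmission (@dob_adj k)) /\
  (forall n : nat,
     (exists u : dob_vertex k, transmission (@dob_adj k) u = n) <->
     3 * k + 4 <= n <= 5 * k + 8) /\
  ITI (@dob_adj k).
Proof.
have card_V : #|dob_vertex k| = 2 * k + 5 by rewrite card_dob_vertex; lia.
have tr_inj : injective (transmission (@dob_adj k)).
  move=> u v; rewrite !transmission_dob // => eq_tr.
  exact/dob_kind_of_inj/(dob_kind_trans_inj hk (dob_kind_of_valid u) (dob_kind_of_valid v)).
have tr_bounds u : 3 * k + 4 <= transmission (@dob_adj k) u <= 5 * k + 8.
  by rewrite transmission_dob // dob_kind_trans_bounds // dob_kind_of_valid.
have tr_range n :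
    (exists u, transmission (@dob_adj k) u = n) <-> 3 * k + 4 <= n <= 5 * k + 8.
  split=> [[u <-] // | ]; apply: inj_interval_surj => //; rewrite card_V; lia.
do !split=> //; exists (3 * k + 4), (5 * k + 8); split=> //; lia.
Qed.
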